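(* Let $X\sim\mathcal N(\mu,\sigma_1^2)$ and $Y\sim\mathcal N(\mu,\sigma_2^2)$ have the same mean, and let $T$ be any random variable independent of $X$ and of $Y$. Let $X'=\max(X,T)$ and $Y'=\max(Y,T)$. Then $|\mathbb{E}X'-\mathbb{E}Y'|\le C\,|\sigma_1-\sigma_2|$ for an absolute constant $C$.
   Context: $\sigma_1,\sigma_2\ge0$ are the standard deviations of $X$ and $Y$. *)

From HB Require Import structures.
From mathcomp Require Import all_boot all_order all_algebra.
From mathcomp Require Import all_classical all_reals all_analysis.
Set Implicit Arguments. Unset Strict Implicit. Unset Printing Implicit Defensive.
Import Order.TTheory GRing.Theory Num.Theory.
Local Open Scope classical_set_scope.
Local Open Scope ring_scope.

Definition indep_rv {d} {Omega : measurableType d} {R : realType}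
  (P : probability Omega R) (X Y : Omega -> R) : Prop :=
  forall A B : set R, measurable A -> measurable B ->
    P (X @^-1` A `&` Y @^-1` B) = (P (X @^-1` A) * P (Y @^-1` B))%E.

(* X ~ N(m, s^2) with s >= 0; the degenerate case s = 0 is the Dirac mass at m
   (the library's normal_pdf has a junk value at s = 0, so we special-case it). *)
Definition is_normal {d} {Omega : measurableType d} {R : realType}
  (P : probability Omega R) (X : {RV P >-> R}) (m s : R) : Prop :=
  forall A : set R, measurable A ->
    distribution P X A = (if s == 0 then \d_m A else normal_prob m s A).

From HB Require Import structures.
From mathcomp Require Import all_boot all_order all_algebra.
From mathcomp Require Import all_classical all_reals all_analysis.
From mathcomp Require Import ring lra measurable_realfun.
Import Order.TTheory GRing.Theory Num.Theory.
Local Open Scope classical_set_scope.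
Local Open Scope ring_scope.

(* Write E W = int_{r >= 0} P(W > r) dr - int_{r < 0} P(W <= r) dr.  By
   independence P(max(X,T) <= r) = F_X(r) F_T(r), so the cdfs (and hence the
   ccdfs) of max(X,T) and max(Y,T) differ pointwise by at most
   |F_X(r) - F_Y(r)|, and |E X' - E Y'| <= int |F_X - F_Y|.  Realising X and Y
   as mu + s1 Z and mu + s2 Z with the same standard normal Z gives
   |F_X(r) - F_Y(r)| <= int |1{mu + s1 z <= r} - 1{mu + s2 z <= r}| phi(z) dz;
   integrating in r first (Tonelli) turns the right-hand side into
   |s1 - s2| int |z| phi(z) dz <= sqrt 2 |s1 - s2|. *)

Section extended_real_inequalities.
Context {R : realType}.
Local Open Scope ereal_scope.

Lemma lee_abseBB (a1 b1 a2 b2 : \bar R) :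
  a1 \is a fin_num -> b1 \is a fin_num -> a2 \is a fin_num -> b2 \is a fin_num ->
  `|(a1 - b1) - (a2 - b2)| <= `|a1 - a2| + `|b1 - b2|.
Proof.
move: a1 b1 a2 b2 => [a1||] // [b1||] // [a2||] // [b2||] // _ _ _ _.
rewrite -!EFinB !abse_EFin -EFinD lee_fin.
have -> : (a1 - b1 - (a2 - b2) = (a1 - a2) - (b1 - b2))%R by ring.
exact: ler_normB.
Qed.

Lemma lee_abse_mulBr (x y t : \bar R) : x \is a fin_num -> y \is a fin_num ->
  0 <= t -> t <= 1 -> `|x * t - y * t| <= `|x - y|.
Proof.
move: x y t => [x||] // [y||] // [t||] // _ _; rewrite ?lee_fin => t0 t1 //.
by rewrite -mulrBl normrM (ger0_norm t0) ler_piMr.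
Qed.

End extended_real_inequalities.

Lemma abse_integralB_le d (T : measurableType d) (R : realType)
    (mu : {measure set T -> \bar R}) (D : set T) (f1 f2 : T -> \bar R) :
  measurable D -> measurable_fun D f1 -> measurable_fun D f2 ->
  (forall x, D x -> 0 <= f1 x)%E -> (forall x, D x -> 0 <= f2 x)%E ->
  (\int[mu]_(x in D) f1 x)%E \is a fin_num ->
  (\int[mu]_(x in D) f2 x)%E \is a fin_num ->
  (`|\int[mu]_(x in D) f1 x - \int[mu]_(x in D) f2 x|
    <= \int[mu]_(x in D) `|f1 x - f2 x|)%E.
Proof.
move=> mD mf1 mf2 f1_ge0 f2_ge0 fin1 fin2.
have ge0_integrable f : measurable_fun D f -> (forall x, D x -> 0 <= f x)%E ->
    (\int[mu]_(x in D) f x)%E \is a fin_num -> mu.-integrable D f.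
  move=> mf f_ge0 fin; apply/integrableP; split => //.
  under eq_integral => x /set_mem Dx do rewrite gee0_abs ?f_ge0 //.
  by rewrite -ge0_fin_numE // integral_ge0.
rewrite -integralB //; [|exact: ge0_integrable ..].
by apply: le_abse_integral => //; exact: emeasurable_funB.
Qed.

Lemma measurable_set_le d (T : measurableType d) (R : realType) (f g : T -> R) :
  measurable_fun setT f -> measurable_fun setT g -> measurable [set x | f x <= g x].
Proof. by move=> mf mg; rewrite -[X in measurable X]setTI; exact: measurable_fun_le. Qed.

Section cdf_distance.
Context {d : measure_display} {Omega : measurableType d} {R : realType}
  {P : probability Omega R}.
Local Notation leb := (@lebesgue_measure R).
Local Open Scope ereal_scope.

Lemma cdf_fin_num (X : {RV P >-> R}) (r : R) : cdf X r \is a fin_num.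
Proof. by rewrite ge0_fin_numE ?cdf_ge0 // (le_lt_trans (cdf_le1 _ _)) ?ltry. Qed.

Lemma measurable_abse_cdfB (X Y : {RV P >-> R}) :
  measurable_fun setT (fun r => `|cdf X r - cdf Y r|).
Proof.
apply: measurableT_comp => //.
by apply: emeasurable_funB; exact: cdf_measurable.
Qed.

Lemma abse_ccdfB (X Y : {RV P >-> R}) (r : R) :
  `|ccdf X r - ccdf Y r| = `|cdf X r - cdf Y r|.
Proof.
rewrite !ccdf_1_cdf; move: (cdf_fin_num X r) (cdf_fin_num Y r).
case: (cdf X r) => [a||] //; case: (cdf Y r) => [b||] // _ _.
rewrite -!EFinB !abse_EFin.
have -> : (1 - a - (1 - b) = b - a)%R by ring.
by rewrite distrC.
Qed.

Lemma abse_expectationB_le (X Y : {RV P >-> R}) :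
  (X : Omega -> R) \in Lfun P 1 -> (Y : Omega -> R) \in Lfun P 1 ->
  `|'E_P[X] - 'E_P[Y]| <= \int[leb]_r `|cdf X r - cdf Y r|.
Proof.
move=> LX LY; have := expectation_fin_num LY; have := expectation_fin_num LX.
have LX' : Lfun P 1 X by move: LX; rewrite inE.
have LY' : Lfun P 1 Y by move: LY; rewrite inE.
rewrite (expectation_cdf_ccdf LX') (expectation_cdf_ccdf LY').
rewrite fin_numB => /andP[finX1 finX2]; rewrite fin_numB => /andP[finY1 finY2].
apply: le_trans (lee_abseBB _ _ _ _ finX1 finX2 finY1 finY2) _.
rewrite -(itv_setU_setT true 0%R) setUC ge0_integral_setU //; last 2 first.
- exact: measurable_funTS (measurable_abse_cdfB X Y).
- apply/disj_setPS => x [] /=; rewrite !in_itv /= andbT.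
  by move=> /le_lt_trans le0 /le0; rewrite ltxx.
apply: leeD.
- under [leRHS]eq_integral => r _ do rewrite -abse_ccdfB.
  apply: abse_integralB_le => //; apply: measurable_funTS; exact: ccdf_measurable.
- apply: abse_integralB_le => //; apply: measurable_funTS; exact: cdf_measurable.
Qed.

Lemma cdf_maxr_indep (X T : {RV P >-> R}) (r : R) : indep_rv P X T ->
  cdf (X \max T : {RV P >-> R}) r = cdf X r * cdf T r.
Proof.
move=> iXT; rewrite /cdf /distribution /pushforward.
have -> : (X \max T) @^-1` `]-oo, r] = X @^-1` `]-oo, r] `&` T @^-1` `]-oo, r].
  by apply/seteqP; split => w /=; rewrite !in_itv /= ge_max => /andP.
exact: iXT.
Qed.

Lemma abse_cdf_maxrB_le (X Y T : {RV P >-> R}) (r : R) :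
  indep_rv P X T -> indep_rv P Y T ->
  `|cdf (X \max T : {RV P >-> R}) r - cdf (Y \max T : {RV P >-> R}) r|
    <= `|cdf X r - cdf Y r|.
Proof.
move=> iXT iYT; rewrite !cdf_maxr_indep //.
by apply: lee_abse_mulBr; rewrite ?cdf_fin_num ?cdf_ge0 ?cdf_le1.
Qed.

End cdf_distance.

Section normal_coupling.
Context {R : realType}.
Local Notation leb := (@lebesgue_measure R).

Lemma affine_cvgNy (m s : R) : 0 < s -> (fun z => z * s + m) x @[x --> -oo] --> -oo.
Proof.
move=> s_gt0; apply/cvgrNyPle => A; near=> x.
by rewrite -lerBrDr -ler_pdivlMr.
Unshelve. all: end_near. Qed.

Lemma derive1_affine (m s : R) : (fun z => z * s + m)^`()%classic = cst s.
Proof.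
apply/funext => x; rewrite derive1E deriveD // deriveM // !derive_cst derive_id.
by rewrite scaler0 add0r addr0 /=; exact: mulr1.
Qed.

Lemma normal_pdf_affine (m s z : R) : 0 < s ->
  normal_pdf m s (z * s + m) * s = normal_pdf 0 1 z.
Proof.
move=> s_gt0; rewrite /normal_pdf gt_eqF // oner_eq0 /normal_fun /normal_peak.
have -> : - (z * s + m - m) ^+ 2 / (s ^+ 2 *+ 2) = - (z - 0) ^+ 2 / (1 ^+ 2 *+ 2).
  by rewrite addrK subr0; field; rewrite gt_eqF.
rewrite -mulrnAr sqrtrM ?sqr_ge0 // sqrtr_sqr gtr0_norm // expr1n mul1r invfM.
have sqrt2pi_neq0 : Num.sqrt (pi *+ 2) != 0 :> R.
  by rewrite gt_eqF // sqrtr_gt0 mulrn_wgt0 // pi_gt0.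
by field; rewrite sqrt2pi_neq0 gt_eqF.
Qed.

Lemma normal_prob_itvNy (m s r : R) : 0 < s ->
  normal_prob m s `]-oo, r] =
  (\int[leb]_(z in `]-oo, ((r - m) / s)%R]) (normal_pdf 0 1 z)%:E)%E.
Proof.
move=> s_gt0; set F := fun z => z * s + m.
have Fb : F ((r - m) / s) = r by rewrite /F divfK ?gt_eqF // subrK.
have dF x : derivable F x 1.
  apply: derivableD; last exact: derivable_cst.
  by apply: derivableM; [exact: derivable_id|exact: derivable_cst].
have cG := @continuous_normal_pdf R m s (lt0r_neq0 s_gt0).
rewrite /normal_prob -[in LHS]Fb increasing_ge0_integration_by_substitutionNy.
- apply: eq_integral => z _; rewrite derive1_affine.
  by rewrite !fctE /= /F normal_pdf_affine.
- by move=> x y _ _ xy; rewrite /F ltrD2r ltr_pM2r.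
- by rewrite derive1_affine => x _; exact: cvg_cst.
- by rewrite derive1_affine; exact: is_cvg_cst.
- by rewrite derive1_affine; exact: cvg_cst.
- split=> [x _|]; first exact: dF.
  exact/cvg_at_left_filter/differentiable_continuous/derivable1_diffP/dF.
- exact: affine_cvgNy.
- apply/continuous_within_itvNycP; split=> [x _|]; first exact: cG.
  exact/cvg_at_left_filter/cG.
- by move=> x _; exact: normal_pdf_ge0.
Qed.

Definition affine_normal_cdf (m s r : R) : \bar R :=
  \int[leb]_(z in [set z | (m + s * z <= r)%R]) (normal_pdf 0 1 z)%:E.

Lemma is_normal_cdf {d} {Omega : measurableType d} {P : probability Omega R}
    (X : {RV P >-> R}) (m s r : R) :
  0 <= s -> is_normal X m s -> cdf X r = affine_normal_cdf m s r.
Proof.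
move=> s_ge0 nX; rewrite /cdf nX // /affine_normal_cdf.
have [->|s_neq0] := eqVneq s 0.
  rewrite diracE mem_setE in_itv /=.
  have -> : [set z : R | m + 0 * z <= r] = if m <= r then setT else set0.
    by apply/seteqP; split => z; rewrite /= mul0r addr0; case: ifP.
  by case: leP => _; rewrite ?integral_normal_pdf ?integral_set0.
have s_gt0 : 0 < s by rewrite lt_neqAle eq_sym s_neq0.
rewrite normal_prob_itvNy //; congr integral.
apply/seteqP; split => z /=; rewrite in_itv /= ler_pdivlMr // => ?; lra.
Qed.

Definition normal_coupling (m s : R) : set (R * R) := [set rz | m + s * rz.2 <= rz.1].

Lemma measurable_normal_coupling (m s : R) : measurable (normal_coupling m s).
Proof.
apply: measurable_set_le; last exact: measurable_fst.
exact: measurable_funD (measurable_cst m) (measurable_funM (measurable_cst s) measurable_snd).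
Qed.

Definition coupling_gap (m s1 s2 : R) (rz : R * R) : \bar R :=
  (`|\1_(normal_coupling m s1) rz - \1_(normal_coupling m s2) rz|
    * normal_pdf 0 1 rz.2)%:E.

Lemma coupling_gap_ge0 (m s1 s2 : R) (rz : R * R) : (0 <= coupling_gap m s1 s2 rz)%E.
Proof. by rewrite lee_fin mulr_ge0 ?normal_pdf_ge0. Qed.

Lemma measurable_coupling_gap (m s1 s2 : R) : measurable_fun setT (coupling_gap m s1 s2).
Proof.
apply/measurable_EFinP; apply: measurable_funM.
  apply: measurableT_comp => //; apply: measurable_funB;
    exact: measurable_indic (measurable_normal_coupling _ _).
exact: measurableT_comp (measurable_normal_pdf _ _) measurable_snd.
Qed.

Lemma abse_affine_normal_cdfB_le (m s1 s2 r : R) :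
  (`|affine_normal_cdf m s1 r - affine_normal_cdf m s2 r|
    <= \int[leb]_z coupling_gap m s1 s2 (r, z))%E.
Proof.
have integrable_cut s : leb.-integrable setT
    ((fun z => (normal_pdf 0 1 z)%:E) \_ [set z | m + s * z <= r]).
  have mS : measurable [set z : R | m + s * z <= r].
    apply: measurable_set_le => //.
    exact: measurable_funD (measurable_cst m)
      (measurable_funM (measurable_cst s) (@measurable_id _ _ setT)).
  apply: (@integrable_mkcond _ _ _ leb _ _ mS).1.
  by apply: integrableS (@integrable_normal_pdf R 0 1).
rewrite /affine_normal_cdf [X in (X - _)%E]integral_mkcond [X in (_ - X)%E]integral_mkcond.
rewrite -integralB //.
apply: le_trans (le_abse_integral _ _ _) _ => //.
  by apply: emeasurable_funB; exact: measurable_int (integrable_cut _).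
under eq_integral => z _.
  rewrite !epatch_indic /= -mulrBr normrM (ger0_norm (normal_pdf_ge0 _ _ _)) mulrC.
  over.
exact: lexx.
Qed.

Lemma normr_le_natB (a b r : R) :
  `|((a <= r)%R)%:R - ((b <= r)%R)%:R| = \1_[set` `[Num.min a b, Num.max a b[] r :> R.
Proof.
rewrite indicE; wlog ab : a b / a <= b.
  move=> wlog; case/orP: (le_total a b) => [|ba]; first exact: wlog.
  by rewrite distrC minC maxC; exact: wlog.
rewrite (min_l ab) (max_r ab) /= mem_setE in_itv /=.
case: (leP a r) => ar; case: (leP b r) => br /=.
- by rewrite subrr normr0.
- by rewrite subr0 normr1.
- by have := le_trans ab br; rewrite leNgt ar.
- by rewrite subrr normr0.
Qed.

Lemma lebesgue_measure_itv_minmax (a b : R) :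
  leb [set` `[Num.min a b, Num.max a b[] = (`|a - b|)%:E.
Proof.
rewrite lebesgue_measure_itv /= lte_fin.
wlog ab : a b / a <= b.
  move=> wlog; case/orP: (le_total a b) => [|ba]; first exact: wlog.
  by rewrite minC maxC distrC; exact: wlog.
rewrite (min_l ab) (max_r ab) distrC ger0_norm ?subr_ge0 //.
case: ifPn => [//|]; rewrite -leNgt => ba.
have -> : b = a by apply/le_anti; rewrite ab ba.
by rewrite subrr.
Qed.

Lemma integral_coupling_gap_fst (m s1 s2 z : R) :
  (\int[leb]_r coupling_gap m s1 s2 (r, z)
    = (`|s1 - s2| * `|z| * normal_pdf 0 1 z)%:E)%E.
Proof.
under eq_integral => r _.
  rewrite /coupling_gap /= !indicE /normal_coupling !mem_setE /= normr_le_natB.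
  rewrite mulrC EFinM.
  over.
rewrite ge0_integralZl //=; last exact: normal_pdf_ge0.
- rewrite integral_indic //= setIT lebesgue_measure_itv_minmax -EFinM.
  by congr EFin; rewrite opprD addrACA subrr add0r -mulrBl normrM mulrC.
- by apply/measurable_EFinP; exact: measurable_indic.
Qed.

Lemma normr_mul_expR_le (z : R) : `|z| * expR (- z ^+ 2 / 2) <= expR (- z ^+ 2 / 4).
Proof.
have normr_le : `|z| <= expR (z ^+ 2 / 4).
  (* |z| <= 1 + z^2/4 because (|z| - 2)^2 >= 0 *)
  apply: le_trans (expR_ge1Dx _).
  have : 0 <= (`|z| - 2) ^+ 2 by exact: sqr_ge0.
  have := real_normK (num_real z); nra.
have -> : - z ^+ 2 / 2 = - z ^+ 2 / 4 + - (z ^+ 2 / 4) by field.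
rewrite expRD mulrA !mulNr expRN.
rewrite -[leRHS]mul1r ler_wpM2r ?invr_ge0 ?expR_ge0 //.
by rewrite ler_pdivrMr ?expR_gt0 // mul1r.
Qed.

(* Equals [Num.sqrt 2]. *)
Definition normal_abs_const : R := normal_peak 1 / normal_peak (Num.sqrt 2).

Lemma normr_mul_normal_pdf_le (z : R) :
  `|z| * normal_pdf 0 1 z <= normal_abs_const * normal_pdf 0 (Num.sqrt 2) z.
Proof.
have sqrt2_neq0 : Num.sqrt 2 != 0 :> R by rewrite gt_eqF // sqrtr_gt0.
have peak_neq0 : normal_peak (Num.sqrt 2) != 0 :> R.
  by rewrite gt_eqF // normal_peak_gt0.
rewrite !normal_pdfE ?oner_eq0 //= /normal_abs_const.
rewrite [leRHS]mulrA divfK // mulrCA ler_wpM2l ?normal_peak_ge0 //.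
rewrite /normal_fun !subr0 sqr_sqrtr ?ler0n // expr1n.
have -> : (2 : R) *+ 2 = 4 by rewrite -mulr_natr; ring.
exact: normr_mul_expR_le.
Qed.

Lemma integral_coupling_gap_le (m s1 s2 : R) :
  (\int[leb]_r \int[leb]_z coupling_gap m s1 s2 (r, z)
    <= (normal_abs_const * `|s1 - s2|)%:E)%E.
Proof.
rewrite fubini_tonelli; last 2 first.
- exact: measurable_coupling_gap.
- exact: coupling_gap_ge0.
under eq_integral => z _ do rewrite integral_coupling_gap_fst.
apply: (@le_trans _ _ (\int[leb]_z ((normal_abs_const * `|s1 - s2|)%:E
                                    * (normal_pdf 0 (Num.sqrt 2) z)%:E))%E).
  apply: ge0_le_integral => //.
  - by move=> z _; rewrite lee_fin !mulr_ge0 ?normal_pdf_ge0.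
  - apply/measurable_EFinP; apply: measurable_funM; last exact: measurable_normal_pdf.
    by apply: measurable_funM => //; exact: measurableT_comp.
  - apply: emeasurable_funM => //; apply/measurable_EFinP; exact: measurable_normal_pdf.
  move=> z _; rewrite -EFinM lee_fin [normal_abs_const * _]mulrC.
  rewrite -[leLHS]mulrA -[leRHS]mulrA.
  by apply: ler_wpM2l => //; exact: normr_mul_normal_pdf_le.
rewrite ge0_integralZl //.
- by rewrite integral_normal_pdf mule1.
- by apply/measurable_EFinP; exact: measurable_normal_pdf.
- by move=> z _; rewrite lee_fin normal_pdf_ge0.
- by rewrite lee_fin mulr_ge0 // /normal_abs_const divr_ge0 // normal_peak_ge0.
Qed.

Lemma integral_abse_cdfB_normal_le {d} {Omega : measurableType d}
    {P : probability Omega R} (X Y : {RV P >-> R}) (m s1 s2 : R) :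
  0 <= s1 -> 0 <= s2 -> is_normal X m s1 -> is_normal Y m s2 ->
  (\int[leb]_r `|cdf X r - cdf Y r| <= (normal_abs_const * `|s1 - s2|)%:E)%E.
Proof.
move=> s1_ge0 s2_ge0 nX nY; apply: le_trans (integral_coupling_gap_le m s1 s2).
apply: ge0_le_integral => //.
- exact: measurable_abse_cdfB.
- exact: (@measurable_fun_fubini_tonelli_F _ _ _ _ R leb _
    (measurable_coupling_gap m s1 s2) (coupling_gap_ge0 m s1 s2)).
move=> r _; rewrite (is_normal_cdf X m s1 r s1_ge0 nX) (is_normal_cdf Y m s2 r s2_ge0 nY).
exact: abse_affine_normal_cdfB_le.
Qed.

End normal_coupling.

Theorem lemma8 (R : realType) :
  exists C : R, forall (d : measure_display) (Omega : measurableType d)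
    (P : probability Omega R) (X Y T : {RV P >-> R}) (mu s1 s2 : R),
    0 <= s1 -> 0 <= s2 ->
    is_normal X mu s1 -> is_normal Y mu s2 ->
    indep_rv P X T -> indep_rv P Y T ->
    P.-integrable setT (fun w => (Num.max (X w) (T w))%:E) ->
    P.-integrable setT (fun w => (Num.max (Y w) (T w))%:E) ->
    (`| \int[P]_w (Num.max (X w) (T w))%:E - \int[P]_w (Num.max (Y w) (T w))%:E |
      <= (C * `|s1 - s2|)%:E)%E.
Proof.
exists normal_abs_const => d Omega P X Y T mu s1 s2 s1_ge0 s2_ge0 nX nY iXT iYT intXT intYT.
rewrite -!(expectation_def (_ \max T)).
have LXT : (X \max T : Omega -> R) \in Lfun P 1 by exact/Lfun1_integrable.
have LYT : (Y \max T : Omega -> R) \in Lfun P 1 by exact/Lfun1_integrable.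
apply: le_trans (abse_expectationB_le _ _ LXT LYT) _.
apply: le_trans (integral_abse_cdfB_normal_le X Y mu s1 s2 s1_ge0 s2_ge0 nX nY).
apply: ge0_le_integral => //; [exact: measurable_abse_cdfB ..|].
by move=> r _; exact: abse_cdf_maxrB_le.
Qed.
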